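(* Let $n=m=1$ (scalars $A\neq0$, $B\neq0$, $Q,R>0$) in the setting of the context, assume $q<q_c$, and let $\beta\in(0,1)$. If $$N_q>\frac{\log(2/\beta)A^4B^4P^4(R+B^2P)^2}{[Q(R+B^2P)^2+(1-q)RA^2B^2P^2]^2},$$ where $P>0$ solves $P=Q+A^2P-(1-q)(R+B^2P)^{-1}A^2B^2P^2$, then with probability at least $1-\beta$ (over the samples) the following holds: if $\hat q<q_c$, then $\hat K$ mean-square stabilizes the system.
   Context: Consider the scalar system $x_{t+1}=Ax_t+\lambda_tBu_t$, $t\ge0$, with $(A,B)$ stabilizable, $x_0$ random with finite mean and variance and $\{\lambda_t\}$ i.i.d. Bernoulli, independent of $x_0$, with $\mathcal{P}(\lambda_t=0)=q$, $q\in(0,1)$ unknown. The estimate is $\hat q=\frac1{N_q}\sum_{i=1}^{N_q}(1-\lambda_i)$ from $N_q$ i.i.d. samples with the same Bernoulli law. For $p\in[0,1)$ the modified Riccati equation with parameter $p$ is $X=Q+A^2X-(1-p)(R+B^2X)^{-1}A^2B^2X^2$; $q_c$ is the critical loss probability such that for every $p\in[0,q_c)$ this equation has a unique positive solution. For $\hat q\in[0,q_c)$ let $\hat P$ be the positive solution for parameter $\hat q$ and $\hat K=-(R+B^2\hat P)^{-1}AB\hat P$. $\hat K$ mean-square stabilizes the system if the closed loop $x_{t+1}=(A+\lambda_tB\hat K)x_t$ satisfies $\lim_{t\to\infty}\mathbb{E}\{x_t^2\}=0$. *)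

From HB Require Import structures.
From mathcomp Require Import all_boot all_order all_algebra.
From mathcomp Require Import all_classical all_reals all_analysis.
Set Implicit Arguments. Unset Strict Implicit. Unset Printing Implicit Defensive.
Import Order.TTheory GRing.Theory Num.Theory.
Import numFieldNormedType.Exports.
Local Open Scope classical_set_scope.
Local Open Scope ring_scope.

Section Defs.
Variable R : realType.

Definition mare_pos_sol (A B Q Rw p X : R) : Prop :=
  0 < X /\
  X = Q + A ^+ 2 * X - (1 - p) * (Rw + B ^+ 2 * X)^-1 * A ^+ 2 * B ^+ 2 * X ^+ 2.

Definition mare_unique_below (A B Q Rw qc : R) : Prop :=
  forall p : R, 0 <= p -> p < qc -> p < 1 -> exists! X : R, mare_pos_sol A B Q Rw p X.

Definition critical_loss_prob (A B Q Rw qc : R) : Prop :=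
  0 < qc <= 1 /\ mare_unique_below A B Q Rw qc /\
  (forall qc' : R, 0 < qc' <= 1 -> mare_unique_below A B Q Rw qc' -> qc' <= qc).

Definition lqr_gain (A B Rw P : R) : R := - ((Rw + B ^+ 2 * P)^-1 * A * B * P).

(* Bernoulli law of one lambda: P(lambda = 0) = q (false), P(lambda = 1) = 1 - q (true) *)
Definition bern_weight (q : R) (b : bool) : R := if b then 1 - q else q.

Definition seq_weight (q : R) (n : nat) (s : {ffun 'I_n -> bool}) : R :=
  \prod_(i < n) bern_weight q (s i).

Definition q_hat (N : nat) (s : {ffun 'I_N -> bool}) : R :=
  (N%:R)^-1 * \sum_(i < N) (1 - (s i)%:R).

Definition cl_traj (A B K x0 : R) (lams : seq bool) : R :=
  foldl (fun x (l : bool) => (A + l%:R * B * K) * x) x0 lams.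

(* E{x_t^2}: expectation under the joint law of x_0 ~ mu and independent
   i.i.d. lambda_0..lambda_{t-1} with P(lambda_i = 0) = q *)
Definition ms_second_moment (mu : probability R R) (q A B K : R) (t : nat) : \bar R :=
  (\int[mu]_x (\sum_(s : {ffun 'I_t -> bool})
        seq_weight q s * (cl_traj A B K x [seq s i | i <- enum 'I_t]) ^+ 2)%:E)%E.

Definition ms_stabilizes (mu : probability R R) (q A B K : R) : Prop :=
  (ms_second_moment mu q A B K) @ \oo --> (0%E : \bar R).

Definition sample_prob (q : R) (N : nat) (E : {ffun 'I_N -> bool} -> Prop) : R :=
  \sum_(s : {ffun 'I_N -> bool} | `[< E s >]) seq_weight q s.

End Defs.

From HB Require Import structures.
From mathcomp Require Import all_boot all_order all_algebra.
From mathcomp Require Import all_classical all_reals all_analysis.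
From mathcomp Require Import ring lra.
Import Order.TTheory GRing.Theory Num.Theory.
Import numFieldNormedType.Exports.
Local Open Scope classical_set_scope.
Local Open Scope ring_scope.

(* Averaging over the i.i.d. losses gives E{x_t^2} = E{x_0^2} rho^t with
   rho = q A^2 + (1 - q) (A + B K)^2, so K stabilizes as soon as |rho| < 1.
   For the gain computed from a positive solution X of the modified Riccati
   equation with parameter p, the equation itself yields
   1 - rho = A^2 (1 - s) (eps(X) - (q - p)),  s = R / (R + B^2 X) in (0, 1),
   where the margin eps is nonincreasing in X; since the positive solution is
   nondecreasing in the parameter, q - qhat < eps(P) guarantees stability.
   The sample-size hypothesis reads N eps(P)^2 > ln (2 / beta), and a Chernoff
   bound gives P(qhat <= q - eps) <= exp (- N eps^2) < beta; the Chernoff factor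
   is controlled through exp y <= (1 - y/2)^-2, which turns it into a
   polynomial inequality. *)

Section closed_loop_moment.
Context {R : realType}.
Implicit Types (q A B K x : R).

Definition ms_growth q A B K : R := q * A ^+ 2 + (1 - q) * (A + B * K) ^+ 2.

Lemma sum_ffun_prod_bool (N : nat) (F : bool -> R) :
  \sum_(s : {ffun 'I_N -> bool}) \prod_(i < N) F (s i) = (F true + F false) ^+ N.
Proof.
rewrite -(bigA_distr_bigA (fun (i : 'I_N) (b : bool) => F b)) /=.
by rewrite prodr_const card_ord big_bool.
Qed.

Lemma cl_trajE A B K x (lams : seq bool) :
  cl_traj A B K x lams = x * \prod_(l <- lams) (A + l%:R * B * K).
Proof.
elim: lams x => [|l ls IH] x /=; first by rewrite big_nil mulr1.
by rewrite /cl_traj /= -/(cl_traj A B K _ ls) IH big_cons mulrCA mulrA.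
Qed.

Lemma sum_seq_weight_cl_traj_sqr q A B K x (t : nat) :
  \sum_(s : {ffun 'I_t -> bool})
     seq_weight q s * cl_traj A B K x [seq s i | i <- enum 'I_t] ^+ 2
  = x ^+ 2 * ms_growth q A B K ^+ t.
Proof.
under eq_bigr => s _ do rewrite cl_trajE big_map big_enum /= exprMn -prodrXl
  mulrC -mulrA -big_split /=.
rewrite -mulr_sumr (sum_ffun_prod_bool t (fun b => (A + b%:R * B * K) ^+ 2 * bern_weight q b)).
rewrite /bern_weight /ms_growth.
by congr (_ * _ ^+ _); rewrite /=; ring.
Qed.

Lemma ms_second_momentE (mu : probability R R) q A B K (t : nat) :
  mu.-integrable setT (fun x => (x ^+ 2)%:E) ->
  ms_second_moment mu q A B K t =
    (\int[mu]_x (x ^+ 2)%:E * (ms_growth q A B K ^+ t)%:E)%E.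
Proof.
move=> int_sqr; rewrite /ms_second_moment -(integralZr measurableT int_sqr).
by apply: eq_integral => x _; rewrite sum_seq_weight_cl_traj_sqr EFinM.
Qed.

Lemma ms_stabilizes_growth (mu : probability R R) q A B K :
  mu.-integrable setT (fun x => (x ^+ 2)%:E) ->
  `|ms_growth q A B K| < 1 -> ms_stabilizes mu q A B K.
Proof.
move=> int_sqr growth_lt1.
have moment_fin := integrable_fin_num measurableT int_sqr.
set c := fine (\int[mu]_x (x ^+ 2)%:E)%E.
rewrite /ms_stabilizes.
have -> : ms_second_moment mu q A B K = fun t => (geometric c (ms_growth q A B K) t)%:E.
  by apply/funext => t; rewrite ms_second_momentE // EFinM /c fineK.
by apply: cvg_EFin; [exact: nearW | exact: cvg_geometric].
Qed.

End closed_loop_moment.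

Definition stability_margin {R : realType} (A B Q Rw q X : R) : R :=
  Q * (Rw + B ^+ 2 * X) / (A ^+ 2 * B ^+ 2 * X ^+ 2) + (1 - q) * Rw / (Rw + B ^+ 2 * X).

Section mare.
Context {R : realType} {A B Q Rw : R}.
Hypotheses (Q_gt0 : 0 < Q) (Rw_gt0 : 0 < Rw).

Lemma riccati_den_gt0 {X} : 0 < X -> 0 < Rw + B ^+ 2 * X.
Proof. by move=> X_gt0; rewrite ltr_pwDl // mulr_ge0 ?sqr_ge0 ?ltW. Qed.

Lemma mare_solve_Q p X :
  X = Q + A ^+ 2 * X - (1 - p) * (Rw + B ^+ 2 * X)^-1 * A ^+ 2 * B ^+ 2 * X ^+ 2 ->
  Q = X - A ^+ 2 * X + (1 - p) * (Rw + B ^+ 2 * X)^-1 * A ^+ 2 * B ^+ 2 * X ^+ 2.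
Proof. by move=> eqX; rewrite {1}eqX; ring. Qed.

Lemma mare_pos_solE {p X} : mare_pos_sol A B Q Rw p X ->
  Q / X = 1 - A ^+ 2 * (p + (1 - p) * (Rw / (Rw + B ^+ 2 * X))).
Proof.
move=> [X_gt0 /mare_solve_Q ->]; have den_gt0 := riccati_den_gt0 X_gt0.
by field; rewrite !gt_eqF.
Qed.

Lemma mare_pos_sol_le {p1 p2 X1 X2} : p1 <= p2 -> p2 <= 1 ->
  mare_pos_sol A B Q Rw p1 X1 -> mare_pos_sol A B Q Rw p2 X2 -> X1 <= X2.
Proof.
move=> p12 p2_le1 sol1 sol2; rewrite leNgt; apply/negP => X21.
have [[X1_gt0 _] [X2_gt0 _]] := (sol1, sol2).
have [den1 den2] := (riccati_den_gt0 X1_gt0, riccati_den_gt0 X2_gt0).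
have s1_le1 : Rw / (Rw + B ^+ 2 * X1) <= 1.
  by rewrite ler_pdivrMr // mul1r lerDl mulr_ge0 ?sqr_ge0 ?ltW.
have s12 : Rw / (Rw + B ^+ 2 * X1) <= Rw / (Rw + B ^+ 2 * X2).
  by rewrite ler_pM2l // lef_pV2 ?posrE // lerD2l ler_wpM2l ?sqr_ge0 ?ltW.
have : Q / X1 < Q / X2 by rewrite ltr_pM2l // ltf_pV2.
rewrite (mare_pos_solE sol1) (mare_pos_solE sol2) ltrD2l ltrN2; apply/negP; rewrite -leNgt.
apply: ler_wpM2l; first exact: sqr_ge0.
nra.
Qed.

Hypotheses (A_neq0 : A != 0) (B_neq0 : B != 0).
Let a_gt0 : 0 < A ^+ 2. Proof. by rewrite exprn_even_gt0. Qed.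
Let b_gt0 : 0 < B ^+ 2. Proof. by rewrite exprn_even_gt0. Qed.

Lemma stability_margin_gt0 {q X} : q <= 1 -> 0 < X -> 0 < stability_margin A B Q Rw q X.
Proof.
move=> q_le1 X_gt0; have den_gt0 := riccati_den_gt0 X_gt0.
apply: ltr_wpDr; first by rewrite divr_ge0 ?mulr_ge0 ?subr_ge0 // ltW.
by rewrite divr_gt0 ?(mulr_gt0 Q_gt0) // (mulr_gt0 (mulr_gt0 a_gt0 b_gt0)) ?exprn_gt0.
Qed.

Lemma stability_margin_le q X1 X2 : q <= 1 -> 0 < X1 -> X1 <= X2 ->
  stability_margin A B Q Rw q X2 <= stability_margin A B Q Rw q X1.
Proof.
move=> q_le1 X1_gt0 X12; have X2_gt0 := lt_le_trans X1_gt0 X12.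
have [den1 den2] := (riccati_den_gt0 X1_gt0, riccati_den_gt0 X2_gt0).
have splitE X : 0 < X -> Q * (Rw + B ^+ 2 * X) / (A ^+ 2 * B ^+ 2 * X ^+ 2) =
    Q / (A ^+ 2 * B ^+ 2) * (Rw / X ^+ 2 + B ^+ 2 / X).
  by move=> X_gt0; field; rewrite gt_eqF ?A_neq0 ?B_neq0.
rewrite /stability_margin (splitE _ X1_gt0) (splitE _ X2_gt0).
apply: lerD.
  rewrite ler_pM2l ?divr_gt0 ?(mulr_gt0 a_gt0) //.
  apply: lerD; rewrite ler_pM2l // lef_pV2 ?posrE ?exprn_gt0 //.
  by rewrite lerXn2r // nnegrE ltW.
rewrite -!(mulrA (1 - q)) ler_wpM2l ?subr_ge0 // ler_pM2l // lef_pV2 ?posrE //.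
by rewrite lerD2l ler_pM2l.
Qed.

Lemma one_sub_ms_growth_lqr_gain p q X : mare_pos_sol A B Q Rw p X ->
  1 - ms_growth q A B (lqr_gain A B Rw X) =
  A ^+ 2 * (B ^+ 2 * X / (Rw + B ^+ 2 * X)) * (stability_margin A B Q Rw q X - (q - p)).
Proof.
move=> [X_gt0 /mare_solve_Q eqQ]; have den_gt0 := riccati_den_gt0 X_gt0.
rewrite /ms_growth /lqr_gain /stability_margin eqQ.
by field; rewrite (gt_eqF den_gt0) (gt_eqF X_gt0) A_neq0 B_neq0.
Qed.

Lemma ms_growth_lqr_gain_lt1 {q p P X} : 0 <= q <= 1 ->
  mare_pos_sol A B Q Rw q P -> mare_pos_sol A B Q Rw p X ->
  q - p < stability_margin A B Q Rw q P ->
  `|ms_growth q A B (lqr_gain A B Rw X)| < 1.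
Proof.
move=> /andP[q_ge0 q_le1] solP solX qp_lt_margin.
have [X_gt0 _] := solX; have den_gt0 := riccati_den_gt0 X_gt0.
have {}qp_lt_margin : q - p < stability_margin A B Q Rw q X.
  have [q_le_p | p_lt_q] := leP q p.
    by apply: le_lt_trans (stability_margin_gt0 q_le1 X_gt0); rewrite subr_le0.
  apply: lt_le_trans qp_lt_margin _; apply: stability_margin_le => //.
  exact: mare_pos_sol_le (ltW p_lt_q) q_le1 solX solP.
have growth_ge0 : 0 <= ms_growth q A B (lqr_gain A B Rw X).
  by apply: addr_ge0; apply: mulr_ge0; rewrite ?subr_ge0 ?sqr_ge0.
rewrite ger0_norm // -subr_gt0 (one_sub_ms_growth_lqr_gain _ _ _ solX).
by rewrite (mulr_gt0 (mulr_gt0 a_gt0 _)) ?subr_gt0 // divr_gt0 // (mulr_gt0 b_gt0).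
Qed.

Lemma sample_size_thresholdE c q X : q <= 1 -> 0 < X ->
  c * A ^+ 4 * B ^+ 4 * X ^+ 4 * (Rw + B ^+ 2 * X) ^+ 2 /
    (Q * (Rw + B ^+ 2 * X) ^+ 2 + (1 - q) * Rw * A ^+ 2 * B ^+ 2 * X ^+ 2) ^+ 2
  = c / stability_margin A B Q Rw q X ^+ 2.
Proof.
move=> q_le1 X_gt0; have den_gt0 := riccati_den_gt0 X_gt0.
have num_gt0 : 0 < Q * (Rw + B ^+ 2 * X) * (Rw + B ^+ 2 * X) +
                   (1 - q) * Rw * (A * B * X) ^+ 2.
  apply: ltr_wpDr; last by rewrite !mulr_gt0.
  by apply: mulr_ge0 (sqr_ge0 _); rewrite mulr_ge0 ?subr_ge0 // ltW.
rewrite /stability_margin; field.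
by rewrite (gt_eqF den_gt0) (gt_eqF X_gt0) (gt_eqF num_gt0) A_neq0 B_neq0.
Qed.

End mare.

Section chernoff.
Context {R : realType}.

Lemma expR_le_inv_sqr (y : R) : y < 2 -> expR y <= ((1 - y / 2) ^+ 2)^-1.
Proof.
move=> y_lt2; have base_gt0 : 0 < 1 - y / 2 by lra.
have -> : expR y = (expR (- (y / 2)) ^+ 2)^-1.
  by rewrite -expRM_natr -expRN; congr expR; field.
rewrite lef_pV2 ?posrE ?exprn_gt0 ?expR_gt0 // lerXn2r ?nnegrE ?expR_ge0 ?(ltW base_gt0) //.
exact: expR_ge1Dx.
Qed.

Variables (q e : R).
Hypotheses (q_ge0 : 0 <= q) (q_le1 : q <= 1) (e_ge0 : 0 <= e).
Let y := 2 * e * q - e ^+ 2.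
Let z := 2 * e * (1 - q) + e ^+ 2.

Let y_le : y <= q ^+ 2.
Proof. by rewrite -subr_ge0 (_ : _ - y = (q - e) ^+ 2) ?sqr_ge0 // /y; ring. Qed.

Let z_ge0 : 0 <= z.
Proof. by rewrite /z addr_ge0 ?sqr_ge0 // !mulr_ge0 ?subr_ge0. Qed.

Let q2_le1 : q ^+ 2 <= 1. Proof. by rewrite expr_le1. Qed.

Lemma inv_sqr_mix_le1 : (1 - q) / (1 - y / 2) ^+ 2 + q / (1 + z / 2) ^+ 2 <= 1.
Proof.
have yq := y_le; have zq := z_ge0; have q2 := q2_le1.
set V := (1 - y / 2) ^+ 2; set U := (1 + z / 2) ^+ 2.
have V_ge : 1 - q <= V.
  have low_ge0 : 0 <= 1 - q ^+ 2 / 2 by lra.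
  have : (1 - q ^+ 2 / 2) ^+ 2 <= V by rewrite /V lerXn2r ?nnegrE; lra.
  have : 0 <= q * (1 - q) + q ^+ 4 / 4 by rewrite addr_ge0 ?mulr_ge0 ?subr_ge0 ?exprn_ge0.
  have -> : (1 - q ^+ 2 / 2) ^+ 2 = 1 - q + (q * (1 - q) + q ^+ 4 / 4) by field.
  lra.
have [V_gt0 U_gt0] : 0 < V /\ 0 < U by split; rewrite exprn_gt0 //; lra.
have sos : U * V - ((1 - q) * U + q * V) =
    e ^+ 2 * (2 * q - 1 - e) ^+ 2 + (1 - q + z) * y ^+ 2 / 4 + z ^+ 2 / 4 * (V - (1 - q)).
  by rewrite /U /V /y /z; field.
have gap_ge0 : 0 <= U * V - ((1 - q) * U + q * V).
  rewrite sos; apply: addr_ge0; first apply: addr_ge0.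
  - exact: mulr_ge0 (sqr_ge0 _) (sqr_ge0 _).
  - by rewrite divr_ge0 // mulr_ge0 ?sqr_ge0 // addr_ge0 ?subr_ge0.
  - by rewrite mulr_ge0 ?subr_ge0 // divr_ge0 ?sqr_ge0.
have -> : (1 - q) / V + q / U = ((1 - q) * U + q * V) / (U * V).
  by field; rewrite !gt_eqF.
by rewrite ler_pdivrMr ?(mulr_gt0 U_gt0 V_gt0) // mul1r -subr_ge0.
Qed.

Lemma chernoff_factor_le :
  expR (2 * e * (q - e)) * (1 - q + q * expR (- (2 * e))) <= expR (- e ^+ 2).
Proof.
have y_expR : expR (2 * e * (q - e)) = expR (- e ^+ 2) * expR y.
  by rewrite -expRD /y; congr expR; ring.
have z_expR : expR (2 * e * (q - e)) * expR (- (2 * e)) = expR (- e ^+ 2) * expR (- z).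
  by rewrite -!expRD /z; congr expR; ring.
have -> : expR (2 * e * (q - e)) * (1 - q + q * expR (- (2 * e))) =
    expR (- e ^+ 2) * ((1 - q) * expR y + q * expR (- z)).
  by rewrite mulrDr mulrCA z_expR y_expR; ring.
rewrite ger_pMr ?expR_gt0 //; apply: le_trans inv_sqr_mix_le1.
have yq := y_le; have zq := z_ge0; have q2 := q2_le1.
apply: lerD; apply: ler_wpM2l; rewrite ?subr_ge0 //.
  by apply: expR_le_inv_sqr; lra.
by rewrite -[X in 1 + X]opprK -mulNr; apply: expR_le_inv_sqr; lra.
Qed.

End chernoff.

Section sample_estimate.
Context {R : realType} {q : R} {N : nat}.
Hypotheses (q_ge0 : 0 <= q) (q_le1 : q <= 1).
Implicit Types (s : {ffun 'I_N -> bool}) (E F : {ffun 'I_N -> bool} -> Prop).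

Lemma seq_weight_ge0 s : 0 <= seq_weight q s.
Proof. by apply: prodr_ge0 => i _; rewrite /bern_weight; case: (s i); rewrite ?subr_ge0. Qed.

Lemma sum_seq_weight : \sum_(s : {ffun 'I_N -> bool}) seq_weight q s = 1.
Proof. by rewrite sum_ffun_prod_bool /bern_weight subrK expr1n. Qed.

Lemma sum_seq_weight_expR t :
  \sum_s seq_weight q s * expR (- t * \sum_(i < N) (1 - (s i)%:R)) =
  (1 - q + q * expR (- t)) ^+ N.
Proof.
under eq_bigr => s _ do rewrite mulr_sumr expR_sum -big_split /=.
rewrite (sum_ffun_prod_bool _ (fun b => bern_weight q b * expR (- t * (1 - b%:R)))).
by rewrite /bern_weight /= subrr mulr0 expR0 mulr1 subr0 mulr1.
Qed.

Lemma q_hat_sum s : N%:R * q_hat R s = \sum_(i < N) (1 - (s i)%:R).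
Proof.
rewrite /q_hat; case: N s => [|n] s; first by rewrite big_ord0 mul0r.
by rewrite mulrA divff ?mul1r // pnatr_eq0.
Qed.

Lemma sample_prob_ge {E F} : (forall s, E s \/ F s) -> 1 - sample_prob q F <= sample_prob q E.
Proof.
move=> EF; rewrite lerBlDr /sample_prob -{1}sum_seq_weight (bigID (fun s => `[< E s >])) /=.
rewrite lerD2l [X in _ <= X]big_mkcond [X in X <= _]big_mkcond /=.
apply: ler_sum => s _; have w_ge0 := seq_weight_ge0 s.
by case: (EF s) => [/asboolT -> | /asboolT ->] /=; case: ifP.
Qed.

Lemma q_hat_lower_tail eps : 0 <= eps ->
  sample_prob q (fun s => q_hat R s <= q - eps) <= expR (- (N%:R * eps ^+ 2)).
Proof.
move=> eps_ge0; set k := fun s => \sum_(i < N) (1 - (s i)%:R : R).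
(* Chernoff: the indicator of the event is at most expR (2 eps (N (q - eps) - k s)). *)
apply: (@le_trans _ _ (\sum_s seq_weight q s * expR (2 * eps * (N%:R * (q - eps) - k s)))).
  rewrite /sample_prob big_mkcond /=; apply: ler_sum => s _.
  have w_ge0 := seq_weight_ge0 s.
  case: asboolP => [low | _]; last by rewrite mulr_ge0 ?expR_ge0.
  apply: ler_peMr => //; apply: le_trans (expR_ge1Dx _); rewrite lerDl.
  rewrite mulr_ge0 ?mulr_ge0 // subr_ge0 /k -q_hat_sum.
  by rewrite ler_wpM2l ?ler0n.
under eq_bigr => s _ do rewrite mulrBr expRD mulrCA -mulNr.
rewrite -mulr_sumr sum_seq_weight_expR.
have -> : expR (2 * eps * (N%:R * (q - eps))) = expR (2 * eps * (q - eps)) ^+ N.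
  by rewrite -expRM_natr; congr expR; ring.
have -> : expR (- (N%:R * eps ^+ 2)) = expR (- eps ^+ 2) ^+ N.
  by rewrite -expRM_natr; congr expR; ring.
rewrite -exprMn lerXn2r ?nnegrE ?expR_ge0 //.
  by rewrite mulr_ge0 ?expR_ge0 // addr_ge0 ?subr_ge0 // mulr_ge0 // expR_ge0.
exact: chernoff_factor_le.
Qed.

End sample_estimate.

Theorem mainTheorem10 (R : realType) (A B Q Rw q qc beta P : R) (N : nat)
    (mu : probability R R) :
  A != 0 -> B != 0 -> 0 < Q -> 0 < Rw ->
  0 < q < 1 ->
  critical_loss_prob A B Q Rw qc ->
  q < qc ->
  mu.-integrable setT (fun x : R => (x ^+ 2)%:E) ->
  0 < beta < 1 ->
  mare_pos_sol A B Q Rw q P ->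
  N%:R > ln (2 / beta) * A ^+ 4 * B ^+ 4 * P ^+ 4 * (Rw + B ^+ 2 * P) ^+ 2 /
         (Q * (Rw + B ^+ 2 * P) ^+ 2 + (1 - q) * Rw * A ^+ 2 * B ^+ 2 * P ^+ 2) ^+ 2 ->
  sample_prob q (fun s : {ffun 'I_N -> bool} =>
     (@q_hat R N s) < qc ->
     forall Phat : R, mare_pos_sol A B Q Rw ((@q_hat R N s)) Phat ->
       ms_stabilizes mu q A B (lqr_gain A B Rw Phat))
  >= 1 - beta.
Proof.
move=> A_neq0 B_neq0 Q_gt0 Rw_gt0 /andP[q_gt0 q_lt1] _ _ int_sqr /andP[beta_gt0 beta_lt1] solP.
have [q_ge0 q_le1] := (ltW q_gt0, ltW q_lt1); have [P_gt0 _] := solP.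
set eps := stability_margin A B Q Rw q P.
have eps_gt0 : 0 < eps by exact: stability_margin_gt0.
rewrite sample_size_thresholdE // ltr_pdivrMr ?exprn_gt0 // => ln_lt; rewrite -/eps in ln_lt.
have tail_le : expR (- (N%:R * eps ^+ 2)) <= beta.
  have ln_gt : - ln beta <= ln (2 / beta).
    rewrite -lnV ?posrE // ler_ln ?posrE ?invr_gt0 ?divr_gt0 //.
    by rewrite ler_peMl ?invr_ge0 ?(ltW beta_gt0) // ler1n.
  by rewrite -[leRHS]lnK ?posrE // ler_expR; lra.
apply: le_trans (sample_prob_ge q_ge0 q_le1 (F := fun s => q_hat R s <= q - eps) _).
  by rewrite lerB //; apply: le_trans tail_le; apply: q_hat_lower_tail; rewrite // ltW.
move=> s; have [|qhat_gt] := leP (q_hat R s) (q - eps); [by right | left].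
move=> _ Phat solPhat; apply: ms_stabilizes_growth int_sqr _.
apply: (ms_growth_lqr_gain_lt1 Q_gt0 Rw_gt0 A_neq0 B_neq0 _ solP solPhat).
  by rewrite q_ge0.
by rewrite -/eps; lra.
Qed.
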